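(* (1) Let $a\in B(H)$. If $a^2=a$ and $\|a\|\le1$, then $a^*=a$, i.e., $a$ is an orthogonal projection. (2) Let $p\in B(H)$ be an orthogonal projection and let $b,c\in B(H)$ satisfy $c^*b=p$ and $\|b+c\|\le2$. Then $\ker p\subset\ker b\cap\ker c$ if and only if $b=c$. In this case, $\ker p=\ker b=\ker c$.
   Context: $H$ is a Hilbert space and $B(H)$ the bounded operators on $H$. *)

From HB Require Import structures.
From mathcomp Require Import all_boot all_order all_algebra.
From mathcomp Require Import boolp classical_sets reals.
From mathcomp.real_closed Require Import complex.
Set Implicit Arguments. Unset Strict Implicit. Unset Printing Implicit Defensive.
Import Order.TTheory GRing.Theory Num.Theory.
Local Open Scope ring_scope.
Local Open Scope classical_set_scope.

Definition inner_product (R : realType) (V : lmodType R[i])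
    (ip : V -> V -> R[i]) : Prop :=
  [/\ (forall x y z : V, ip (x + y) z = ip x z + ip y z),
      (forall (k : R[i]) (x y : V), ip (k *: x) y = k * ip x y),
      (forall x y : V, ip y x = (ip x y)^*),
      (forall x : V, 0 <= ip x x) &
      (forall x : V, ip x x = 0 -> x = 0)].

Definition hnorm (R : realType) (V : lmodType R[i]) (ip : V -> V -> R[i])
    (x : V) : R :=
  Num.sqrt (complex.Re (ip x x)).

Definition hcomplete (R : realType) (V : lmodType R[i])
    (ip : V -> V -> R[i]) : Prop :=
  forall u : nat -> V,
    (forall e : R, 0 < e -> exists N : nat, forall m n : nat,
        (N <= m)%N -> (N <= n)%N -> hnorm ip (u m - u n) < e) ->
    exists l : V, forall e : R, 0 < e -> exists N : nat, forall n : nat,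
        (N <= n)%N -> hnorm ip (u n - l) < e.

Definition hilbert (R : realType) (V : lmodType R[i])
    (ip : V -> V -> R[i]) : Prop :=
  inner_product ip /\ hcomplete ip.

Definition bounded_op (R : realType) (V : lmodType R[i])
    (ip : V -> V -> R[i]) (a : V -> V) : Prop :=
  [/\ (forall x y : V, a (x + y) = a x + a y),
      (forall (k : R[i]) (x : V), a (k *: x) = k *: a x) &
      exists M : R, forall x : V, hnorm ip (a x) <= M * hnorm ip x].

Definition opnorm (R : realType) (V : lmodType R[i])
    (ip : V -> V -> R[i]) (a : V -> V) : R :=
  sup [set hnorm ip (a x) | x in [set x : V | hnorm ip x <= 1]].

Definition is_adjoint (R : realType) (V : lmodType R[i])
    (ip : V -> V -> R[i]) (a a' : V -> V) : Prop :=
  forall x y : V, ip (a x) y = ip x (a' y).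

Definition selfadjoint (R : realType) (V : lmodType R[i])
    (ip : V -> V -> R[i]) (a : V -> V) : Prop :=
  is_adjoint ip a a.

Definition orth_proj (R : realType) (V : lmodType R[i])
    (ip : V -> V -> R[i]) (p : V -> V) : Prop :=
  [/\ bounded_op ip p, p \o p = p & selfadjoint ip p].

Definition kernel (R : realType) (V : lmodType R[i]) (a : V -> V) : set V :=
  [set x | a x = 0].

(* (1) If a = a^2 is a contraction, x = a x and a y = 0, then
   |x| = |a (x + t y)| <= |x + t y| for every scalar t, which forces <x, y> = 0.
   So the range and the kernel of a are orthogonal, and
   <a x, y> = <a x, a y> = <x, a y>.
   (2) From c^* b = p we get <b x, c x> = <p x, x> = |p x|^2, so polarization gives
   |(b - c) x|^2 = |(b + c) x|^2 - 4 |p x|^2 <= 4 (|x|^2 - |p x|^2).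
   Hence b = c on the range of p, and b = c everywhere once both vanish on ker p.
   Conversely, if b = c then p = b^* b, whose kernel is ker b. *)

From HB Require Import structures.
From mathcomp Require Import all_boot all_order all_algebra.
From mathcomp Require Import boolp classical_sets reals.
From mathcomp.real_closed Require Import complex.
From mathcomp Require Import ring lra.
Set Implicit Arguments. Unset Strict Implicit. Unset Printing Implicit Defensive.
Import Order.TTheory GRing.Theory Num.Theory.
Local Open Scope complex_scope.
Local Open Scope ring_scope.
Local Open Scope classical_set_scope.

(* [conjc_real] in the [Num.conj] form that [rewrite] sees in ring_scope. *)
Lemma conjC_realC (R : realType) (k : R) : (k%:C)^* = k%:C.
Proof. exact: conjc_real. Qed.

Lemma addr_conjC (R : realType) (z : R[i]) : z + z^* = (2 * complex.Re z)%:C.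
Proof. by rewrite rmorphM /= ReJ_add rmorph_nat mulrC divfK ?pnatr_eq0. Qed.

Lemma ger0_ReC (R : realType) (z : R[i]) : 0 <= z -> z = (complex.Re z)%:C.
Proof. by case: z => a b /ger0_Im /= ->. Qed.

Lemma additive_morphB (U W : zmodType) (f : U -> W) :
  {morph f : x y / x + y} -> {morph f : x y / x - y}.
Proof. by move=> fD x y; apply/eqP; rewrite eq_sym subr_eq -fD subrK. Qed.

Lemma comp_idemK (T : Type) (f : T -> T) : f \o f = f -> forall x, f (f x) = f x.
Proof. by move=> ff x; rewrite -[in RHS]ff. Qed.

Section InnerProductSpace.
Variables (R : realType) (V : lmodType R[i]) (ip : V -> V -> R[i]).
Hypothesis ipV : inner_product ip.

Lemma ipDl x y z : ip (x + y) z = ip x z + ip y z.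
Proof. by case: ipV. Qed.

Lemma ipZl k x y : ip (k *: x) y = k * ip x y.
Proof. by case: ipV. Qed.

Lemma ip_conj x y : ip y x = (ip x y)^*.
Proof. by case: ipV. Qed.

Lemma ip_eq0 x : ip x x = 0 -> x = 0.
Proof. by case: ipV => _ _ _ _; apply. Qed.

Lemma ip0l x : ip 0 x = 0.
Proof. by rewrite -(scale0r 0) ipZl mul0r. Qed.

Lemma ip0r x : ip x 0 = 0.
Proof. by rewrite ip_conj ip0l conjC0. Qed.

Lemma ipDr x y z : ip x (y + z) = ip x y + ip x z.
Proof. by rewrite ip_conj ipDl rmorphD /= -!ip_conj. Qed.

Lemma ipZr k x y : ip x (k *: y) = k^* * ip x y.
Proof. by rewrite ip_conj ipZl rmorphM /= -ip_conj. Qed.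

Lemma ipNr x y : ip x (- y) = - ip x y.
Proof. by rewrite -scaleN1r ipZr rmorphN /= conjC1 mulN1r. Qed.

Definition sqnorm x := complex.Re (ip x x).

Lemma ip_sqnorm x : ip x x = (sqnorm x)%:C.
Proof. by apply: ger0_ReC; case: ipV. Qed.

Lemma sqnorm_ge0 x : 0 <= sqnorm x.
Proof. by rewrite -ler0c -ip_sqnorm; case: ipV. Qed.

Lemma sqnorm_eq0 x : sqnorm x = 0 -> x = 0.
Proof. by move=> x0; apply: ip_eq0; rewrite ip_sqnorm x0. Qed.

Lemma sqr_hnorm x : hnorm ip x ^+ 2 = sqnorm x.
Proof. exact/sqr_sqrtr/sqnorm_ge0. Qed.

Lemma hnorm_ge0 x : 0 <= hnorm ip x.
Proof. exact: sqrtr_ge0. Qed.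

Lemma hnorm_eq0 x : hnorm ip x = 0 -> x = 0.
Proof. by move=> x0; apply: sqnorm_eq0; rewrite -sqr_hnorm x0 expr0n. Qed.

Lemma sqnormZ (k : R) x : sqnorm (k%:C *: x) = k ^+ 2 * sqnorm x.
Proof.
apply: complexI; rewrite -ip_sqnorm ipZl ipZr conjC_realC ip_sqnorm.
by rewrite rmorphM rmorphXn /=; ring.
Qed.

Lemma hnormZ (k : R) x : hnorm ip (k%:C *: x) = `|k| * hnorm ip x.
Proof. by rewrite /hnorm -/(sqnorm _) sqnormZ sqrtrM ?sqrtr_sqr // sqr_ge0. Qed.

Lemma sqnormD u v :
  sqnorm (u + v) = sqnorm u + sqnorm v + 2 * complex.Re (ip u v).
Proof.
apply: complexI; rewrite -ip_sqnorm !rmorphD /= -!ip_sqnorm -addr_conjC.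
by rewrite ipDl !ipDr (ip_conj u v); ring.
Qed.

Lemma sqnormB u v :
  sqnorm (u - v) = sqnorm u + sqnorm v - 2 * complex.Re (ip u v).
Proof.
apply: complexI; rewrite -ip_sqnorm rmorphB rmorphD /= -!ip_sqnorm -addr_conjC.
by rewrite ipDl !ipDr -scaleN1r !ipZl !ipZr rmorphN /= conjC1 (ip_conj u v); ring.
Qed.

Lemma sqnormD_le u v : sqnorm (u + v) <= 2 * sqnorm u + 2 * sqnorm v.
Proof. have := sqnorm_ge0 (u - v); rewrite sqnormB sqnormD; lra. Qed.

Lemma bounded_op0 f : bounded_op ip f -> f 0 = 0.
Proof. by case=> _ fZ _; rewrite -(scale0r 0) fZ !scale0r. Qed.

Lemma hnorm_le_opnorm f x :
  bounded_op ip f -> hnorm ip (f x) <= opnorm ip f * hnorm ip x.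
Proof.
move=> fB; have [_ fZ [M fM]] := fB.
have ball_le_opnorm y : hnorm ip y <= 1 -> hnorm ip (f y) <= opnorm ip f.
  move=> y1; apply: ub_le_sup; last by exists y.
  exists `|M| => _ [z z1 <-]; apply: le_trans (fM z) _.
  apply: le_trans _ (ler_piMr (normr_ge0 M) z1).
  by rewrite ler_wpM2r ?hnorm_ge0 ?ler_norm.
have [/hnorm_eq0 -> | x_neq0] := eqVneq (hnorm ip x) 0.
  by rewrite bounded_op0 // /hnorm ip0l sqrtr0 !mulr0.
have x_gt0 : 0 < hnorm ip x by rewrite lt_neqAle eq_sym x_neq0 hnorm_ge0.
have := ball_le_opnorm ((hnorm ip x)^-1%:C *: x).
rewrite fZ !hnormZ ger0_norm ?invr_ge0 ?hnorm_ge0 // mulVf // lexx.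
by move=> /(_ isT); rewrite ler_pdivrMl // mulrC.
Qed.

Lemma sqnorm_le_of_hnorm_le (M : R) x y :
  hnorm ip y <= M * hnorm ip x -> sqnorm y <= M ^+ 2 * sqnorm x.
Proof.
move=> yx; rewrite -!sqr_hnorm -exprMn.
by rewrite lerXn2r // ?nnegrE ?hnorm_ge0 // (le_trans (hnorm_ge0 y)).
Qed.

Lemma sqnorm_le_of_opnorm_le f (K : R) x :
  bounded_op ip f -> opnorm ip f <= K -> sqnorm (f x) <= K ^+ 2 * sqnorm x.
Proof.
move=> fB fK; apply: sqnorm_le_of_hnorm_le.
by apply: le_trans (hnorm_le_opnorm x fB) _; rewrite ler_wpM2r ?hnorm_ge0.
Qed.

Lemma bounded_opD f g :
  bounded_op ip f -> bounded_op ip g -> bounded_op ip (fun x => f x + g x).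
Proof.
move=> [fD fZ [M fM]] [gD gZ [N gN]]; split.
- by move=> x y; rewrite fD gD addrACA.
- by move=> k x; rewrite fZ gZ scalerDr.
exists (Num.sqrt (2 * M ^+ 2 + 2 * N ^+ 2)) => x.
rewrite /hnorm -!/(sqnorm _) -sqrtrM; last by rewrite addr_ge0 // mulr_ge0 // sqr_ge0.
apply: ler_wsqrtr; apply: le_trans (sqnormD_le _ _) _.
have := sqnorm_le_of_hnorm_le (fM x); have := sqnorm_le_of_hnorm_le (gN x).
lra.
Qed.

Lemma ip_eq0_of_sqnorm_le_addZ x y :
  (forall t, sqnorm x <= sqnorm (x + t *: y)) -> ip x y = 0.
Proof.
move=> x_min; set w := ip x y.
have wq := ger0_ReC (mul_conjC_ge0 w); set q := complex.Re _ in wq.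
have q_ge0 : 0 <= q by rewrite -ler0c -wq mul_conjC_ge0.
set s := (1 + sqnorm y)^-1.
have s_gt0 : 0 < s by rewrite invr_gt0; have := sqnorm_ge0 y; lra.
have sE : s * (1 + sqnorm y) = 1 by rewrite mulVf // gt_eqF // -invr_gt0.
(* t = - s <x, y> turns the minimality into s (1 + s) |<x, y>|^2 <= 0. *)
have := x_min (- (s%:C * w)).
have -> : sqnorm (x + - (s%:C * w) *: y) =
    sqnorm x - 2 * s * q + s ^+ 2 * q * sqnorm y.
  apply: complexI; rewrite -ip_sqnorm ipDl !ipDr !ipZl !ipZr (ip_conj x y) -/w.
  rewrite !rmorphN !rmorphM /= conjC_realC !ip_sqnorm.
  by rewrite rmorphD rmorphB !rmorphM /= -wq rmorph_nat; ring.
have sNy : s * sqnorm y = 1 - s by move: sE; rewrite mulrDr mulr1; lra.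
have -> : s ^+ 2 * q * sqnorm y = s * q * (1 - s) by rewrite -sNy; ring.
move=> le_x; have : s * (1 + s) * q <= 0 by lra.
rewrite pmulr_rle0 ?mulr_gt0 ?addr_gt0 // => q_le0.
have q_eq0 : q = 0 by lra.
by apply/eqP; rewrite -mul_conjC_eq0 wq q_eq0.
Qed.

Lemma kernel_adjoint_comp b b' : is_adjoint ip b b' -> kernel (b' \o b) = kernel b.
Proof.
move=> bb'; apply/seteqP; split=> x; rewrite /kernel /= => x0.
  by apply: ip_eq0; rewrite bb' x0 ip0r.
by rewrite x0; apply: ip_eq0; rewrite -bb' ip0r.
Qed.

Section IdempotentContraction.
Variable a : V -> V.
Hypotheses (aD : forall x y, a (x + y) = a x + a y)
  (aZ : forall k x, a (k *: x) = k *: a x)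
  (a_contr : forall x, sqnorm (a x) <= sqnorm x)
  (aaK : forall x, a (a x) = a x).

Lemma ip_fixed_kernel_eq0 x y : a x = x -> a y = 0 -> ip x y = 0.
Proof.
move=> ax ay; apply: ip_eq0_of_sqnorm_le_addZ => t.
by have := a_contr (x + t *: y); rewrite aD aZ ax ay scaler0 addr0.
Qed.

Lemma selfadjoint_idempotent_contraction : selfadjoint ip a.
Proof.
have fixed_kernel x : a (a x - x) = 0 by rewrite additive_morphB // aaK subrr.
move=> x y.
have /eqP := ip_fixed_kernel_eq0 (aaK x) (fixed_kernel y).
rewrite ipDr ipNr subr_eq0 => /eqP <-.
have /eqP := ip_fixed_kernel_eq0 (aaK y) (fixed_kernel x).
by rewrite ipDr ipNr subr_eq0 => /eqP /(congr1 Num.conj); rewrite -!ip_conj.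
Qed.

End IdempotentContraction.

Section AdjointFactorization.
Variables p b c c' : V -> V.
Hypotheses (pD : forall x y, p (x + y) = p x + p y)
  (bD : forall x y, b (x + y) = b x + b y)
  (cD : forall x y, c (x + y) = c x + c y)
  (ppK : forall x, p (p x) = p x) (p_sa : selfadjoint ip p)
  (cc' : is_adjoint ip c c') (c'b : c' \o b = p)
  (bc_le : forall x, sqnorm (b x + c x) <= 2 ^+ 2 * sqnorm x).

Lemma ip_factor x : ip (b x) (c x) = (sqnorm (p x))%:C.
Proof.
rewrite ip_conj cc' -[c' (b x)]/((c' \o b) x) c'b -ip_conj.
by rewrite -{1}ppK p_sa ip_sqnorm.
Qed.

Lemma sqnorm_sub_le x : sqnorm (b x - c x) <= 4 * (sqnorm x - sqnorm (p x)).
Proof.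
by have := bc_le x; rewrite sqnormB sqnormD ip_factor /=; lra.
Qed.

Lemma eq_on_range x : b (p x) = c (p x).
Proof.
have := sqnorm_sub_le (p x); rewrite ppK subrr mulr0 => le0.
apply/eqP; rewrite -subr_eq0; apply/eqP/sqnorm_eq0.
by apply/le_anti; rewrite le0 sqnorm_ge0.
Qed.

Lemma eq_of_kernel_sub : kernel p `<=` kernel b `&` kernel c -> b = c.
Proof.
move=> ker_sub; apply: funext => z.
have [bz cz] : kernel b (z - p z) /\ kernel c (z - p z).
  by apply: ker_sub; rewrite /kernel /= additive_morphB // ppK subrr.
by rewrite -[z](subrK (p z)) bD cD bz cz eq_on_range.
Qed.

End AdjointFactorization.

End InnerProductSpace.

Theorem lemma4p1 (R : realType) (V : lmodType R[i]) (ip : V -> V -> R[i]) :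
  hilbert ip ->
  (forall a : V -> V,
      bounded_op ip a -> a \o a = a -> opnorm ip a <= 1 -> selfadjoint ip a) /\
  (forall p b c c' : V -> V,
      orth_proj ip p -> bounded_op ip b -> bounded_op ip c ->
      is_adjoint ip c c' -> c' \o b = p ->
      opnorm ip (fun x => b x + c x) <= 2 ->
      ((kernel p `<=` kernel b `&` kernel c) <-> b = c) /\
      (b = c -> kernel p = kernel b /\ kernel p = kernel c)).
Proof.
move=> [ipV _]; split.
  move=> a /[dup] aB [aD aZ _] /comp_idemK aaK a1.
  apply: (selfadjoint_idempotent_contraction ipV aD aZ _ aaK) => x.
  by have := sqnorm_le_of_opnorm_le ipV x aB a1; rewrite expr1n mul1r.
move=> p b c c' [[pD _ _] /comp_idemK ppK p_sa] /[dup] bB [bD _ _] /[dup] cB [cD _ _].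
move=> cc' c'b bc2.
have bc_le x : sqnorm ip (b x + c x) <= 2 ^+ 2 * sqnorm ip x.
  exact: (sqnorm_le_of_opnorm_le ipV x (bounded_opD ipV bB cB) bc2).
have ker_pb : b = c -> kernel p = kernel b.
  by move=> bc; rewrite -c'b (kernel_adjoint_comp ipV) // bc.
split; first split.
- exact: (eq_of_kernel_sub ipV pD bD cD ppK p_sa cc' c'b bc_le).
- by move=> bc; rewrite ker_pb // -bc setIid.
- by move=> bc; rewrite ker_pb // -bc.
Qed.
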